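(* Let $H_1,H_2$ be complex Hilbert spaces and let $T$ be a densely defined closed operator from $H_1$ to $H_2$. Then for each $\epsilon>0$ there exists $S\in\mathcal B(H_1,H_2)$ with $\|S\|\leq\epsilon$ such that $S+T$ (with domain $D(T)$) is minimum attaining and $\theta(S+T,T)\leq\epsilon$. Moreover, if $m(T)>0$, then $S$ can be chosen to be a rank one operator.
   Context: Hilbert spaces are complex and infinite dimensional. For a densely defined closed operator $A$ with domain $D(A)$, the minimum modulus is $m(A)=\inf\{\|Ax\|: x\in D(A),\ \|x\|=1\}$, and $A$ is called minimum attaining if there exists $x_0\in D(A)$ with $\|x_0\|=1$ and $\|Ax_0\|=m(A)$. The graph of $A$ is $G(A)=\{(Ax,x):x\in D(A)\}$; the gap between densely defined closed operators $A,B$ is $\theta(A,B)=\|P_{G(A)}-P_{G(B)}\|$, where $P_M$ is the orthogonal projection onto the closed subspace $M$. *)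

From HB Require Import structures.
From mathcomp Require Import all_boot all_order all_algebra.
From mathcomp Require Import complex.
From mathcomp Require Import boolp classical_sets reals.

Set Implicit Arguments.
Unset Strict Implicit.
Unset Printing Implicit Defensive.

Import Order.TTheory GRing.Theory Num.Theory.
Local Open Scope ring_scope.
Local Open Scope classical_set_scope.

Record hilbert (R : realType) := Hilbert {
  hcar :> lmodType R[i];
  hdot : hcar -> hcar -> R[i];
  hdotDl : forall (a : R[i]) (x y z : hcar),
      hdot (a *: x + y) z = a * hdot x z + hdot y z;
  hdotC : forall x y : hcar, hdot y x = (hdot x y)^*;
  hdot_ge0 : forall x : hcar, 0 <= hdot x x;
  hdot_eq0 : forall x : hcar, hdot x x = 0 -> x = 0;
  hcomplete : forall u : nat -> hcar,
      (forall e : R, 0 < e -> exists N : nat, forall m n : nat, (N <= m)%N -> (N <= n)%N ->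
         Num.sqrt (complex.Re (hdot (u m - u n) (u m - u n))) < e) ->
      exists l : hcar, forall e : R, 0 < e -> exists N : nat, forall n : nat, (N <= n)%N ->
         Num.sqrt (complex.Re (hdot (u n - l) (u n - l))) < e
}.

Section Defs.
Variable R : realType.

Definition hnorm (H : hilbert R) (x : H) : R := Num.sqrt (complex.Re (hdot x x)).

Definition infinite_dimensional (H : hilbert R) : Prop :=
  forall n : nat, exists f : 'I_n -> H,
    forall c : 'I_n -> R[i], \sum_(i < n) c i *: f i = 0 -> forall i, c i = 0.

Definition hcvg (H : hilbert R) (u : nat -> H) (l : H) : Prop :=
  forall e : R, 0 < e -> exists N : nat, forall n : nat, (N <= n)%N -> hnorm (u n - l) < e.

Variables H1 H2 : hilbert R.

Definition linear_subspace (D : set H1) : Prop :=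
  D 0 /\ forall (a : R[i]) (x y : H1), D x -> D y -> D (a *: x + y).

Definition linear_on (D : set H1) (T : H1 -> H2) : Prop :=
  forall (a : R[i]) (x y : H1), D x -> D y -> T (a *: x + y) = a *: T x + T y.

Definition dense_in (D : set H1) : Prop :=
  forall (x : H1) (e : R), 0 < e -> exists d : H1, D d /\ hnorm (x - d) < e.

Definition closed_operator (D : set H1) (T : H1 -> H2) : Prop :=
  forall (u : nat -> H1) (x : H1) (y : H2),
    (forall n, D (u n)) -> hcvg u x -> hcvg (fun n => T (u n)) y -> D x /\ T x = y.

Definition densely_defined_closed (D : set H1) (T : H1 -> H2) : Prop :=
  [/\ linear_subspace D, linear_on D T, dense_in D & closed_operator D T].

Definition bounded_operator (S : H1 -> H2) : Prop :=
  (forall (a : R[i]) (x y : H1), S (a *: x + y) = a *: S x + S y) /\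
  exists M : R, forall x : H1, hnorm (S x) <= M * hnorm x.

Definition op_norm (S : H1 -> H2) : R :=
  sup [set r : R | exists x : H1, hnorm x <= 1 /\ r = hnorm (S x)].

Definition rank_one (S : H1 -> H2) : Prop :=
  exists v : H2, v <> 0 /\ (forall x : H1, exists c : R[i], S x = c *: v) /\
                 exists x : H1, S x <> 0.

Definition min_modulus (D : set H1) (A : H1 -> H2) : R :=
  inf [set r : R | exists x : H1, D x /\ hnorm x = 1 /\ r = hnorm (A x)].

Definition minimum_attaining (D : set H1) (A : H1 -> H2) : Prop :=
  exists x0 : H1, D x0 /\ hnorm x0 = 1 /\ hnorm (A x0) = min_modulus D A.

Definition dot21 (z w : H2 * H1) : R[i] := hdot z.1 w.1 + hdot z.2 w.2.
Definition norm21 (z : H2 * H1) : R := Num.sqrt (hnorm z.1 ^+ 2 + hnorm z.2 ^+ 2).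
Definition sub21 (z w : H2 * H1) : H2 * H1 := (z.1 - w.1, z.2 - w.2).

Definition graph (D : set H1) (A : H1 -> H2) : set (H2 * H1) :=
  [set w | exists x : H1, D x /\ w = (A x, x)].

Definition is_orth_proj (M : set (H2 * H1)) (z p : H2 * H1) : Prop :=
  M p /\ forall w, M w -> dot21 (sub21 z p) w = 0.

(* gap theta(A,B) = || P_G(A) - P_G(B) || *)
Definition gap (DA : set H1) (A : H1 -> H2) (DB : set H1) (B : H1 -> H2) : R :=
  sup [set r : R | exists z p q : H2 * H1,
        [/\ norm21 z <= 1, is_orth_proj (graph DA A) z p,
            is_orth_proj (graph DB B) z q & r = norm21 (sub21 p q)]].

End Defs.

(* Choose a unit vector x0 in D(T) with |T x0|^2 < m^2 + d, where m = m(T), and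
   split T x0 = v + p with p in the closure of M = T{y in D(T) | y _|_ x0} and
   v _|_ M; since |T x0 - T y| >= m |x0 - y| >= m for y _|_ x0, also |v| >= m.
   For 0 <= mu <= m let u = (mu / |v|) v and S = <., x0> (u - T x0).  Then
   (S + T)(a x0 + y) = a u + T y is an orthogonal sum with |T y| >= mu |y|, so
   S + T attains its minimum modulus mu at x0; and, as v _|_ p and |v| >= m,
   |S|^2 = |u - T x0|^2 <= |T x0|^2 - m^2 + (m - mu)^2 is small when mu is close
   to m.  Testing the orthogonality relations of the two graph projections
   against each other bounds the gap between the graphs of S + T and T by
   sqrt (2 |S|).  Finally mu < m when m > 0 forces u <> T x0, i.e. S <> 0. *)

From HB Require Import structures.
From mathcomp Require Import all_boot all_order all_algebra.
From mathcomp Require Import complex.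
From mathcomp Require Import boolp classical_sets reals.
From mathcomp Require Import ring lra.
Set Implicit Arguments.
Unset Strict Implicit.
Unset Printing Implicit Defensive.

Import Order.TTheory GRing.Theory Num.Theory.
Local Open Scope complex_scope.
Local Open Scope ring_scope.
Local Open Scope classical_set_scope.

Local Notation normc := Normc.normc.

Section RealFacts.
Variable R : realDomainType.
Implicit Types a b : R.

Lemma le_of_sqr_le a b : 0 <= b -> a ^+ 2 <= b ^+ 2 -> a <= b.
Proof.
move=> b_ge0 ab; have [a_ge0|a_lt0] := lerP 0 a; last exact: le_trans (ltW a_lt0) b_ge0.
by rewrite -ler_sqr ?nnegrE.
Qed.

Lemma lt_of_sqr_lt a b : 0 <= b -> a ^+ 2 < b ^+ 2 -> a < b.
Proof.
move=> b_ge0 ab; have [a_ge0|a_lt0] := lerP 0 a; last exact: lt_le_trans a_lt0 b_ge0.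
by rewrite -ltr_sqr ?nnegrE.
Qed.

Lemma exists_nonneg_near_below (m c : R) :
  0 <= m -> 0 < c -> exists mu, [/\ 0 <= mu, mu <= m, m - mu <= c & (0 < m -> mu < m)].
Proof.
move=> m_ge0 c_gt0; exists (Num.max 0 (m - c)); split.
- by rewrite le_max lexx.
- by rewrite ge_max m_ge0 lerBlDr lerDl ltW.
- have : m - c <= Num.max 0 (m - c) by rewrite le_max lexx orbT.
  lra.
- by move=> m_gt0; rewrite gt_max m_gt0 ltrBlDr ltrDl.
Qed.

End RealFacts.

Lemma inf_ge0 (R : realType) (E : set R) : (forall r, E r -> 0 <= r) -> 0 <= inf E.
Proof.
move=> E_ge0; have [->|/set0P E_neq0] := eqVneq E set0; first by rewrite inf0.
exact: lb_le_inf.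
Qed.

Lemma inf_sqr_approx (R : realType) (E : set R) e :
  E !=set0 -> (forall r, E r -> 0 <= r) -> 0 < e -> exists2 r, E r & r ^+ 2 < inf E ^+ 2 + e.
Proof.
move=> E_neq0 E_ge0 e_gt0; have sum_ge0 : 0 <= inf E ^+ 2 + e by rewrite addr_ge0 ?sqr_ge0 // ltW.
have inf_lt_sqrt : inf E < Num.sqrt (inf E ^+ 2 + e).
  by apply: lt_of_sqr_lt; rewrite ?sqrtr_ge0 // sqr_sqrtr // ltrDl.
have [r Er r_lt] := inf_lt E_neq0 inf_lt_sqrt.
exists r => //; rewrite -(sqr_sqrtr sum_ge0) ltr_sqr ?nnegrE ?sqrtr_ge0 //.
exact: E_ge0.
Qed.

Lemma eventually_inv_succ_lt (R : archiFieldType) (c : R) :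
  0 < c -> exists N : nat, forall n, (N <= n)%N -> (n.+1%:R)^-1 < c.
Proof.
move=> c_gt0; exists (Num.Def.archi_bound c^-1) => n leNn.
rewrite invf_plt ?posrE ?ltr0Sn //.
have c_inv_ge0 : 0 <= c^-1 by rewrite invr_ge0 ltW.
apply: lt_le_trans (archi_boundP c_inv_ge0) _.
by rewrite ler_nat (leq_trans leNn).
Qed.

Section ComplexModulus.
Variable R : rcfType.
Implicit Types x y : R[i].

Lemma Re_add x y : complex.Re (x + y) = complex.Re x + complex.Re y.
Proof. by case: x; case: y. Qed.

Lemma Re_opp x : complex.Re (- x) = - complex.Re x.
Proof. by case: x. Qed.

Lemma Re_realM (k : R) x : complex.Re (k%:C * x) = k * complex.Re x.
Proof. by case: x => a b /=; rewrite mul0r subr0. Qed.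

Lemma Re_conj x : complex.Re x^* = complex.Re x.
Proof. by case: x. Qed.

Lemma conj_real (k : R) : k%:C^* = k%:C.
Proof. by apply/eqP; rewrite eq_complex /= oppr0 !eqxx. Qed.

Lemma mulc_conj x : x * x^* = (normc x ^+ 2)%:C.
Proof.
case: x => a b; rewrite /= sqr_sqrtr ?addr_ge0 ?sqr_ge0 //.
by apply/eqP; rewrite eq_complex /= !mulrN opprK -!expr2 mulrC addNr !eqxx.
Qed.

Lemma normc_ge0 x : 0 <= normc x.
Proof. by case: x => a b; exact: sqrtr_ge0. Qed.

Lemma normc_real (k : R) : normc k%:C = `|k|.
Proof. by rewrite /= expr0n addr0 sqrtr_sqr. Qed.

Lemma abs_Re_le_normc x : `|complex.Re x| <= normc x.
Proof.
case: x => a b; apply: le_of_sqr_le; first exact: sqrtr_ge0.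
by rewrite /= real_normK ?num_real // sqr_sqrtr ?addr_ge0 ?sqr_ge0 // lerDl sqr_ge0.
Qed.

End ComplexModulus.

Section InnerProduct.
Variables (R : realType) (H : hilbert R).
Implicit Types (x y z v p q : H) (a : R[i]).

Lemma dotDl x y z : hdot (x + y) z = hdot x z + hdot y z.
Proof. by rewrite -(scale1r x) hdotDl mul1r scale1r. Qed.

Lemma dot0l z : hdot 0 z = 0.
Proof. by apply: (addrI (hdot 0 z)); rewrite -dotDl !addr0. Qed.

Lemma dotZl a x z : hdot (a *: x) z = a * hdot x z.
Proof. by rewrite -(addr0 (a *: x)) hdotDl dot0l addr0. Qed.

Lemma dotNl x z : hdot (- x) z = - hdot x z.
Proof. by rewrite -scaleN1r dotZl mulN1r. Qed.

Lemma dotBl x y z : hdot (x - y) z = hdot x z - hdot y z.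
Proof. by rewrite dotDl dotNl. Qed.

Lemma dotDr x y z : hdot z (x + y) = hdot z x + hdot z y.
Proof. by rewrite !(hdotC _ z) dotDl rmorphD. Qed.

Lemma dotZr a x z : hdot z (a *: x) = a^* * hdot z x.
Proof. by rewrite !(hdotC _ z) dotZl rmorphM. Qed.

Lemma dot0r z : hdot z 0 = 0.
Proof. by rewrite hdotC dot0l rmorph0. Qed.

Lemma dotNr x z : hdot z (- x) = - hdot z x.
Proof. by rewrite !(hdotC _ z) dotNl rmorphN. Qed.

Lemma dotBr x y z : hdot z (x - y) = hdot z x - hdot z y.
Proof. by rewrite dotDr dotNr. Qed.

Lemma Re_dotC x y : complex.Re (hdot y x) = complex.Re (hdot x y).
Proof. by rewrite hdotC Re_conj. Qed.

Lemma hnorm_sqr x : hnorm x ^+ 2 = complex.Re (hdot x x).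
Proof. by rewrite sqr_sqrtr //; have := hdot_ge0 x; rewrite lecE => /andP[]. Qed.

Lemma dot_self x : hdot x x = (hnorm x ^+ 2)%:C.
Proof.
rewrite hnorm_sqr; have := hdot_ge0 x; rewrite lecE => /andP[/eqP].
by case: (hdot x x) => a b /= ->.
Qed.

Lemma hnorm_ge0 x : 0 <= hnorm x.
Proof. exact: sqrtr_ge0. Qed.

Lemma hnorm0 : hnorm (0 : H) = 0.
Proof. by rewrite /hnorm dot0l sqrtr0. Qed.

Lemma hnorm_eq0 x : (hnorm x == 0) = (x == 0).
Proof.
apply/eqP/eqP => [x0|->]; last exact: hnorm0.
by apply: hdot_eq0; rewrite dot_self x0 expr0n.
Qed.

Lemma hnorm_gt0 x : (0 < hnorm x) = (x != 0).
Proof. by rewrite lt_def hnorm_eq0 hnorm_ge0 andbT. Qed.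

Lemma hnormN x : hnorm (- x) = hnorm x.
Proof. by rewrite /hnorm dotNl dotNr opprK. Qed.

Lemma hnormD_sqr x y :
  hnorm (x + y) ^+ 2 = hnorm x ^+ 2 + 2 * complex.Re (hdot x y) + hnorm y ^+ 2.
Proof. by rewrite !hnorm_sqr dotDl !dotDr !Re_add (Re_dotC x y); ring. Qed.

Lemma hnormB_sqr x y :
  hnorm (x - y) ^+ 2 = hnorm x ^+ 2 - 2 * complex.Re (hdot x y) + hnorm y ^+ 2.
Proof. by rewrite hnormD_sqr dotNr Re_opp hnormN; ring. Qed.

Lemma hnormD_sqr_orth x y : hdot x y = 0 -> hnorm (x + y) ^+ 2 = hnorm x ^+ 2 + hnorm y ^+ 2.
Proof. by move=> xy; rewrite hnormD_sqr xy mulr0 addr0. Qed.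

Lemma hnormZ a x : hnorm (a *: x) = normc a * hnorm x.
Proof.
by rewrite /hnorm dotZl dotZr mulrA mulc_conj Re_realM sqrtrM ?exprn_ge0 ?normc_ge0 // sqrtr_sqr ger0_norm ?normc_ge0.
Qed.

Lemma hnormZ_real (k : R) x : hnorm (k%:C *: x) = `|k| * hnorm x.
Proof. by rewrite hnormZ normc_real. Qed.

Lemma hnormB_sym x y : hnorm (x - y) = hnorm (y - x).
Proof. by rewrite -hnormN opprB. Qed.

Lemma cauchy_schwarz x y : normc (hdot x y) <= hnorm x * hnorm y.
Proof.
have [->|y_neq0] := eqVneq y 0; first by rewrite dot0r Normc.normc0 hnorm0 mulr0.
set n := hnorm y ^+ 2.
have n_gt0 : 0 < n by rewrite exprn_gt0 // hnorm_gt0.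
have : 0 <= hnorm (x - n^-1%:C *: (hdot x y *: y)) ^+ 2 by exact: sqr_ge0.
rewrite hnormB_sqr !hnormZ normc_real !dotZr conj_real (mulrC _^*) mulc_conj.
rewrite Re_realM /= ger0_norm; last by rewrite invr_ge0 ltW.
set N := normc _.
have -> : (n^-1 * (N * hnorm y)) ^+ 2 = n^-1 * N ^+ 2.
  by rewrite !exprMn -/n; field; rewrite lt0r_neq0.
move=> cs; apply: le_of_sqr_le; first by rewrite mulr_ge0 ?hnorm_ge0.
have : n^-1 * N ^+ 2 <= hnorm x ^+ 2 by lra.
by rewrite exprMn -/n mulrC ler_pdivrMr.
Qed.

Lemma cauchy_schwarz_Re x y : `|complex.Re (hdot x y)| <= hnorm x * hnorm y.
Proof. by apply: le_trans (cauchy_schwarz x y); apply: abs_Re_le_normc. Qed.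

Lemma hnorm_triangle x y : hnorm (x + y) <= hnorm x + hnorm y.
Proof.
apply: le_of_sqr_le; first by rewrite addr_ge0 ?hnorm_ge0.
rewrite hnormD_sqr sqrrD lerD2r lerD2l mulr2n.
by have := cauchy_schwarz_Re x y; rewrite ler_norml => /andP[_]; lra.
Qed.

Lemma hnormB_triangle x y z : hnorm (x - z) <= hnorm (x - y) + hnorm (y - z).
Proof. by have := hnorm_triangle (x - y) (y - z); rewrite addrA subrK. Qed.

Lemma apollonius x y z :
  hnorm (x - y) ^+ 2 = 2 * hnorm (z - x) ^+ 2 + 2 * hnorm (z - y) ^+ 2
                       - 4 * hnorm (z - (2^-1)%:C *: (x + y)) ^+ 2.
Proof.
have -> : z - (2^-1)%:C *: (x + y) = (2^-1)%:C *: ((z - x) + (z - y)).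
  rewrite addrACA -opprD scalerBr [_ *: (z + z)]scalerDr -scalerDl.
  by rewrite -rmorphD -[2^-1]mul1r -splitr rmorph1 scale1r.
have -> : x - y = (z - y) - (z - x) by rewrite [RHS]addrC opprB addrA subrK.
rewrite hnormZ_real ger0_norm ?invr_ge0 ?ler0n // exprMn.
by rewrite hnormB_sqr (hnormD_sqr (z - x)) (Re_dotC (z - x)); field.
Qed.

Lemma orth_decomp_unit (x0 : H) x : hnorm x0 = 1 ->
  hdot (x - hdot x x0 *: x0) x0 = 0 /\
  hnorm x ^+ 2 = normc (hdot x x0) ^+ 2 + hnorm (x - hdot x x0 *: x0) ^+ 2.
Proof.
move=> x0_1; set y := x - _.
have yx0 : hdot y x0 = 0 by rewrite dotBl dotZl dot_self x0_1 expr1n mulr1 subrr.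
split => //; rewrite -{1}(subrK (hdot x x0 *: x0) x) -/y addrC hnormD_sqr_orth.
  by rewrite hnormZ x0_1 mulr1.
by rewrite dotZl (hdotC y x0) yx0 rmorph0 mulr0.
Qed.

Lemma hnorm_rescale v (mu : R) :
  0 <= mu -> (v = 0 -> mu = 0) -> hnorm ((mu / hnorm v)%:C *: v) = mu.
Proof.
move=> mu_ge0 mu0; rewrite hnormZ_real ger0_norm ?divr_ge0 ?hnorm_ge0 //.
have [v0|v_neq0] := eqVneq v 0; first by rewrite mu0 // !mul0r.
by rewrite divfK // hnorm_eq0.
Qed.

Lemma hnorm_rescale_sub_sqr v p (m mu : R) :
  hdot v p = 0 -> 0 <= mu -> mu <= m -> m <= hnorm v ->
  hnorm ((mu / hnorm v)%:C *: v - (v + p)) ^+ 2 <= hnorm (v + p) ^+ 2 - m ^+ 2 + (m - mu) ^+ 2.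
Proof.
move=> vp mu_ge0 mu_le m_le.
rewrite hnormB_sqr hnormZ_real ger0_norm ?divr_ge0 ?hnorm_ge0 //.
rewrite dotZl Re_realM dotDr vp addr0 -hnorm_sqr.
set d := hnorm v in m_le *; set k := mu / d.
have kd : k * d = mu.
  have [d0|d_neq0] := eqVneq d 0; last exact: divfK.
  by rewrite d0 mulr0; apply/le_anti; rewrite mu_ge0 -d0 (le_trans mu_le m_le).
have kd_sqr : (k * d) ^+ 2 = mu ^+ 2 by rewrite kd.
have kd2 : k * d ^+ 2 = mu * d by rewrite expr2 mulrA kd.
by have := ler_wpM2l mu_ge0 m_le; lra.
Qed.

Lemma dotBB_split z p q :
  hdot (p - q) (p - q) = hdot (z - q) p + hdot (z - p) q - hdot (z - p) p - hdot (z - q) q.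
Proof. by rewrite !dotBl !dotBr; ring. Qed.

End InnerProduct.

Section Projection.
Variables (R : realType) (H : hilbert R).
Implicit Types (M : set H) (p q u v w z : H).

Definition in_closure M p := forall e : R, 0 < e -> exists u, M u /\ hnorm (p - u) < e.

Definition dist_to M z := inf [set r | exists u, M u /\ r = hnorm (z - u)].

Lemma linear_subspaceZ M a u : linear_subspace M -> M u -> M (a *: u).
Proof. by move=> [M0 Mlin] Mu; rewrite -[_ *: _]addr0; apply: Mlin. Qed.

Lemma linear_subspaceB M u v : linear_subspace M -> M u -> M v -> M (u - v).
Proof. by move=> [_ Mlin] Mu Mv; rewrite addrC -scaleN1r; apply: Mlin. Qed.

Lemma in_closure_addZ M a w p :
  linear_subspace M -> M w -> in_closure M p -> in_closure M (a *: w + p).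
Proof.
move=> [_ Mlin] Mw Mp e e_gt0; have [u [Mu pu]] := Mp e e_gt0.
by exists (a *: w + u); split; [exact: Mlin | rewrite opprD addrACA subrr add0r].
Qed.

Lemma orth_closure M v p : (forall u, M u -> hdot v u = 0) -> in_closure M p -> hdot v p = 0.
Proof.
move=> vM Mp; suff : normc (hdot v p) <= 0.
  by move=> vp_le0; apply: Normc.eq0_normc; apply/eqP; rewrite eq_le vp_le0 normc_ge0.
apply/ler_addgt0Pr => e e_gt0; rewrite add0r.
have v1_gt0 : 0 < hnorm v + 1 by rewrite ltr_wpDl ?hnorm_ge0.
have [u [Mu pu]] := Mp _ (divr_gt0 e_gt0 v1_gt0).
rewrite -(subrK u p) dotDr (vM u Mu) addr0.
apply: le_trans (cauchy_schwarz v (p - u)) _.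
apply: le_trans (ler_wpM2l (hnorm_ge0 v) (ltW pu)) _.
by rewrite mulrA ler_pdivrMr // mulrDr mulr1 mulrC lerDl ltW.
Qed.

Lemma dist_le_closure M z q r :
  (forall u, M u -> r <= hnorm (z - u)) -> in_closure M q -> r <= hnorm (z - q).
Proof.
move=> rM Mq; apply/ler_addgt0Pr => e e_gt0; have [u [Mu qu]] := Mq e e_gt0.
by have := hnormB_triangle z q u; have := rM u Mu; lra.
Qed.

Lemma orth_of_min_dist v w : (forall a : R[i], hnorm v <= hnorm (v - a *: w)) -> hdot v w = 0.
Proof.
move=> vmin; set W := hnorm w ^+ 2.
have W1_gt0 : 0 < W + 1 by rewrite ltr_wpDl ?sqr_ge0.
set t := (W + 1)^-1.
have t_gt0 : 0 < t by rewrite invr_gt0.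
have tW_lt1 : t * W < 1 by rewrite mulrC ltr_pdivrMr // mul1r ltrDl.
have := vmin (t%:C * hdot v w); rewrite -scalerA -ler_sqr ?nnegrE ?hnorm_ge0 //.
rewrite hnormB_sqr !hnormZ normc_real (ger0_norm (ltW t_gt0)) !dotZr conj_real.
rewrite (mulrC _^*) mulc_conj Re_realM /= !exprMn -/W.
set N := normc _ => vmin_t.
have : t * (2 * N ^+ 2) <= t * (t * W * N ^+ 2) by lra.
rewrite ler_pM2l // => N2_le.
have N2_ge0 := sqr_ge0 N; have tWN2_le := ler_piMl N2_ge0 (ltW tW_lt1).
have /eqP : N ^+ 2 = 0 by lra.
by rewrite sqrf_eq0 => /eqP/Normc.eq0_normc.
Qed.

Lemma dist_to_le M z u : M u -> dist_to M z <= hnorm (z - u).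
Proof. by move=> Mu; apply: ge_inf; [exists 0 => _ [w [_ ->]]; exact: hnorm_ge0 | exists u]. Qed.

Lemma dist_to_ge0 M z : 0 <= dist_to M z.
Proof. by apply: inf_ge0 => _ [u [_ ->]]; exact: hnorm_ge0. Qed.

Lemma dist_to_approx M z e :
  M 0 -> 0 < e -> exists u, M u /\ hnorm (z - u) ^+ 2 < dist_to M z ^+ 2 + e.
Proof.
move=> M0 e_gt0; set E := [set r | exists u, M u /\ r = hnorm (z - u)].
have E_neq0 : E !=set0 by exists (hnorm (z - 0)), 0.
have E_ge0 r : E r -> 0 <= r by move=> [u [_ ->]]; exact: hnorm_ge0.
by have [_ [u [Mu ->]] zu_lt] := inf_sqr_approx E_neq0 E_ge0 e_gt0; exists u.
Qed.

Lemma dist_to_cauchy M z u v : linear_subspace M -> M u -> M v ->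
  hnorm (u - v) ^+ 2 <=
  2 * (hnorm (z - u) ^+ 2 - dist_to M z ^+ 2) + 2 * (hnorm (z - v) ^+ 2 - dist_to M z ^+ 2).
Proof.
move=> Msub Mu Mv; set d := dist_to M z.
have Mmid : M ((2^-1)%:C *: (u + v)).
  by have [_ Mlin] := Msub; apply: linear_subspaceZ => //; rewrite -[u]scale1r; apply: Mlin.
have : d ^+ 2 <= hnorm (z - (2^-1)%:C *: (u + v)) ^+ 2.
  by rewrite ler_sqr ?nnegrE ?dist_to_ge0 ?hnorm_ge0 ?dist_to_le.
by rewrite (apollonius u v z); lra.
Qed.

Lemma min_dist_point M z :
  linear_subspace M -> exists p, in_closure M p /\ hnorm (z - p) <= dist_to M z.
Proof.
move=> Msub; set d := dist_to M z.
have /choice[u u_near] :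
    forall n : nat, exists x, M x /\ hnorm (z - x) ^+ 2 < d ^+ 2 + (n.+1%:R)^-1.
  by move=> n; apply: dist_to_approx; [exact: Msub.1 | rewrite invr_gt0].
have u_near_ev e : 0 < e -> exists N, forall n, (N <= n)%N -> hnorm (z - u n) ^+ 2 < d ^+ 2 + e.
  move=> e_gt0; have [N Ne] := eventually_inv_succ_lt e_gt0.
  exists N => n Nn; have := Ne n Nn; have := (u_near n).2.
  (* the two copies of [1 / (n + 1)] live in different structures; [set] merges them *)
  by set i := (n.+1%:R)^-1; lra.
have e2_gt0 (e : R) : 0 < e -> 0 < e ^+ 2 / 4 by move=> e_gt0; rewrite divr_gt0 ?exprn_gt0.
have [p u_cvg] : exists p, hcvg u p.
  apply: hcomplete => e e_gt0; have [N uN] := u_near_ev _ (e2_gt0 e e_gt0).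
  exists N => m n Nm Nn; apply: lt_of_sqr_lt; first exact: ltW.
  have := dist_to_cauchy z Msub (u_near m).1 (u_near n).1.
  by have := uN m Nm; have := uN n Nn; rewrite -/(hnorm _); lra.
exists p; split.
  move=> e e_gt0; have [N uN] := u_cvg e e_gt0.
  by exists (u N); split; [exact: (u_near N).1 | rewrite hnormB_sym; exact: uN].
apply/ler_addgt0Pr => e e_gt0; have e_half : 0 < e / 2 by rewrite divr_gt0.
have [N1 uN1] := u_cvg _ e_half; have [N2 uN2] := u_near_ev _ (e2_gt0 e e_gt0).
set n := maxn N1 N2.
have zu_lt : hnorm (z - u n) < d + e / 2.
  apply: lt_of_sqr_lt; first by rewrite addr_ge0 ?dist_to_ge0 // ltW.
  have := uN2 n (leq_maxr _ _); have := dist_to_ge0 M z; rewrite -/d; nra.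
by have := hnormB_triangle z (u n) p; have := uN1 n (leq_maxl _ _); lra.
Qed.

Lemma orth_proj_exists M z :
  linear_subspace M -> exists p, in_closure M p /\ forall w, M w -> hdot (z - p) w = 0.
Proof.
move=> Msub; have [p [Mp zp_min]] := min_dist_point z Msub.
exists p; split => // w Mw; apply: orth_of_min_dist => a.
rewrite [_ - _ *: _]addrAC -addrA -opprD.
apply: (dist_le_closure (M := M)); last exact: in_closure_addZ.
by move=> u Mu; apply: le_trans zp_min (dist_to_le _ Mu).
Qed.

End Projection.

Section Gap.
Variables (R : realType) (H1 H2 : hilbert R).
Implicit Types (z p q : H2 * H1) (M : set (H2 * H1)).

Lemma norm21_sqr z : norm21 z ^+ 2 = hnorm z.1 ^+ 2 + hnorm z.2 ^+ 2.
Proof. by rewrite sqr_sqrtr // addr_ge0 ?sqr_ge0. Qed.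

Lemma orth_proj_pythagoras M z p :
  is_orth_proj M z p -> norm21 z ^+ 2 = norm21 (sub21 z p) ^+ 2 + norm21 p ^+ 2.
Proof.
move=> [Mp /(_ p Mp)]; rewrite /dot21 /= => /(congr1 (@complex.Re R)); rewrite Re_add /= => orth.
rewrite !norm21_sqr /= -{1}(subrK p.1 z.1) -{1}(subrK p.2 z.2) !hnormD_sqr; lra.
Qed.

Lemma orth_proj_bounds M z p :
  is_orth_proj M z p -> norm21 z <= 1 -> hnorm p.2 <= 1 /\ hnorm (z.1 - p.1) <= 1.
Proof.
move=> /orth_proj_pythagoras pyth z_le1.
have : norm21 z ^+ 2 <= 1 by rewrite -(expr1n _ 2) ler_sqr ?nnegrE ?sqrtr_ge0.
rewrite pyth !norm21_sqr /= => sum_le1.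
have := sqr_ge0 (hnorm p.1); have := sqr_ge0 (hnorm (z.2 - p.2)).
have := sqr_ge0 (hnorm p.2); have := sqr_ge0 (hnorm (z.1 - p.1)).
by split; apply: le_of_sqr_le; rewrite ?ler01 // expr1n; lra.
Qed.

Lemma graph_proj_sub_sqr (D : set H1) (S T : H1 -> H2) z p q :
  is_orth_proj (graph D (fun x => S x + T x)) z p -> is_orth_proj (graph D T) z q ->
  norm21 (sub21 p q) ^+ 2 =
  complex.Re (hdot (z.1 - q.1) (S p.2)) - complex.Re (hdot (z.1 - p.1) (S q.2)).
Proof.
move=> [[x [Dx ->]] orthA] [[y [Dy ->]] orthT] /=.
have := orthA _ (ex_intro _ x (conj Dx erefl)); have := orthA _ (ex_intro _ y (conj Dy erefl)).
have := orthT _ (ex_intro _ x (conj Dx erefl)); have := orthT _ (ex_intro _ y (conj Dy erefl)).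
rewrite /dot21 /sub21 /= !dotDr.
(* turn each relation [a + b = 0] into [b = - a + 0], to eliminate the [H1]-components *)
move=> /(canRL (addKr _)) Ty /(canRL (addKr _)) Tx /(canRL (addKr _)) Ay /(canRL (addKr _)) Ax.
rewrite norm21_sqr /= !hnorm_sqr -Re_add (dotBB_split z.1) (dotBB_split z.2) !dotDr.
by rewrite Tx Ty Ax Ay -Re_opp -Re_add; congr complex.Re; ring.
Qed.

Lemma graph_proj_sub_sqr_le (D : set H1) (S T : H1 -> H2) c z p q :
  0 <= c -> (forall x, hnorm (S x) <= c * hnorm x) -> norm21 z <= 1 ->
  is_orth_proj (graph D (fun x => S x + T x)) z p -> is_orth_proj (graph D T) z q ->
  norm21 (sub21 p q) ^+ 2 <= 2 * c.
Proof.
move=> c_ge0 S_le z_le1 projA projT; rewrite (graph_proj_sub_sqr projA projT).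
have [p2_le1 zp1_le1] := orth_proj_bounds projA z_le1.
have [q2_le1 zq1_le1] := orth_proj_bounds projT z_le1.
have Re_le (a : H2) (x : H1) : hnorm a <= 1 -> hnorm x <= 1 -> `|complex.Re (hdot a (S x))| <= c.
  move=> a_le1 x_le1; apply: le_trans (cauchy_schwarz_Re _ _) _.
  apply: le_trans (ler_pM (hnorm_ge0 _) (hnorm_ge0 _) a_le1 (S_le x)) _.
  by rewrite mul1r ler_piMr.
have := Re_le _ _ zq1_le1 p2_le1; have := Re_le _ _ zp1_le1 q2_le1.
by rewrite !ler_norml => /andP[? ?] /andP[? ?]; lra.
Qed.

Lemma gap_perturbation_le (D : set H1) (S T : H1 -> H2) c :
  0 <= c -> (forall x, hnorm (S x) <= c * hnorm x) ->
  gap D (fun x => S x + T x) D T <= Num.sqrt (2 * c).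
Proof.
move=> c_ge0 S_le; rewrite /gap; set E := [set r | _].
have [->|/set0P E_neq0] := eqVneq E set0; first by rewrite sup0 sqrtr_ge0.
apply: ge_sup => // _ [z [p [q [z_le1 projA projT ->]]]].
apply: le_of_sqr_le; first exact: sqrtr_ge0.
rewrite [X in _ <= X]sqr_sqrtr ?mulr_ge0 //.
exact: graph_proj_sub_sqr_le projA projT.
Qed.

End Gap.

Section RankOne.
Variables (R : realType) (H1 H2 : hilbert R).

Lemma op_norm_le (S : H1 -> H2) c :
  0 <= c -> (forall x, hnorm (S x) <= c * hnorm x) -> op_norm S <= c.
Proof.
move=> c_ge0 S_le; apply: ge_sup; first by exists (hnorm (S 0)), 0; rewrite hnorm0 ler01.
by move=> _ [x [x_le1 ->]]; apply: le_trans (S_le x) _; rewrite ler_piMr.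
Qed.

Definition rank_one_op (x0 : H1) (w : H2) : H1 -> H2 := fun x => hdot x x0 *: w.

Lemma rank_one_op_self x0 w : hnorm x0 = 1 -> rank_one_op x0 w x0 = w.
Proof. by move=> x0_1; rewrite /rank_one_op dot_self x0_1 expr1n scale1r. Qed.

Lemma hnorm_rank_one_op x0 w x :
  hnorm (rank_one_op x0 w x) <= hnorm w * hnorm x0 * hnorm x.
Proof.
rewrite hnormZ mulrC -mulrA [hnorm x0 * _]mulrC ler_wpM2l ?hnorm_ge0 //.
exact: cauchy_schwarz.
Qed.

Lemma bounded_rank_one_op x0 w : bounded_operator (rank_one_op x0 w).
Proof.
split; first by move=> a x y; rewrite /rank_one_op hdotDl scalerDl scalerA.
by exists (hnorm w * hnorm x0); exact: hnorm_rank_one_op.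
Qed.

Lemma rank_one_rank_one_op x0 w : x0 != 0 -> w != 0 -> rank_one (rank_one_op x0 w).
Proof.
move=> x0_neq0 w_neq0; exists w; split; first exact/eqP.
split; first by move=> x; exists (hdot x x0).
exists x0; apply/eqP; rewrite /rank_one_op dot_self scaler_eq0 negb_or w_neq0 andbT.
by rewrite fmorph_eq0 sqrf_eq0 hnorm_eq0.
Qed.

End RankOne.

Lemma infinite_dimensional_neq0 (R : realType) (H : hilbert R) :
  infinite_dimensional H -> exists x : H, x != 0.
Proof.
move=> /(_ 1%N) [f f_free]; exists (f ord0); apply/eqP => f0.
have := f_free (fun _ => 1); rewrite big_ord1 scale1r f0 => /(_ erefl ord0) /eqP.
by rewrite oner_eq0.
Qed.

Lemma dense_subspace_unit (R : realType) (H : hilbert R) (D : set H) :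
  linear_subspace D -> dense_in D -> (exists x : H, x != 0) -> exists e, D e /\ hnorm e = 1.
Proof.
move=> Dsub Ddense [x x_neq0].
have x_gt0 : 0 < hnorm x by rewrite hnorm_gt0.
have [d [Dd xd]] := Ddense x _ x_gt0.
have d_neq0 : d != 0 by apply: contraTneq xd => ->; rewrite subr0 ltxx.
exists ((hnorm d)^-1%:C *: d); split; first exact: linear_subspaceZ.
by rewrite hnormZ_real ger0_norm ?invr_ge0 ?hnorm_ge0 // mulVf // hnorm_eq0.
Qed.

Section DenselyDefined.
Variables (R : realType) (H1 H2 : hilbert R) (D : set H1) (T : H1 -> H2).
Hypotheses (Dsub : linear_subspace D) (Tlin : linear_on D T).
Local Notation m := (min_modulus D T).

Lemma linear_on0 : T 0 = 0.
Proof.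
have := Tlin 1 Dsub.1 Dsub.1; rewrite scale1r !addr0 scale1r => T00.
by apply: (addrI (T 0)); rewrite addr0 -T00.
Qed.

Lemma linear_onZ a x : D x -> T (a *: x) = a *: T x.
Proof. by move=> Dx; have := Tlin a Dx Dsub.1; rewrite !addr0 linear_on0 addr0. Qed.

Lemma linear_onB x y : D x -> D y -> T (x - y) = T x - T y.
Proof. by move=> Dx Dy; rewrite addrC -scaleN1r Tlin // scaleN1r addrC. Qed.

Lemma min_modulus_ge0 : 0 <= m.
Proof. by apply: inf_ge0 => _ [x [_ [_ ->]]]; exact: hnorm_ge0. Qed.

Lemma min_modulus_lb x : D x -> m * hnorm x <= hnorm (T x).
Proof.
move=> Dx; have [->|x_neq0] := eqVneq x 0; first by rewrite linear_on0 !hnorm0 mulr0.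
have x_gt0 : 0 < hnorm x by rewrite hnorm_gt0.
have k_ge0 : 0 <= (hnorm x)^-1 by rewrite invr_ge0 ltW.
have : m <= hnorm (T ((hnorm x)^-1%:C *: x)).
  apply: ge_inf; first by exists 0 => _ [y [_ [_ ->]]]; exact: hnorm_ge0.
  exists ((hnorm x)^-1%:C *: x); split; first exact: linear_subspaceZ.
  by rewrite hnormZ_real ger0_norm // mulVf ?lt0r_neq0.
by rewrite linear_onZ // hnormZ_real ger0_norm // mulrC ler_pdivlMr.
Qed.

Lemma exists_unit_near_min_modulus e :
  (exists x, D x /\ hnorm x = 1) -> 0 < e ->
  exists x0, [/\ D x0, hnorm x0 = 1 & hnorm (T x0) ^+ 2 < m ^+ 2 + e].
Proof.
move=> [x1 [Dx1 x1_1]] e_gt0.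
set E := [set r | exists x, D x /\ hnorm x = 1 /\ r = hnorm (T x)].
have E_neq0 : E !=set0 by exists (hnorm (T x1)), x1.
have E_ge0 r : E r -> 0 <= r by move=> [x [_ [_ ->]]]; exact: hnorm_ge0.
by have [_ [x0 [Dx0 [x0_1 ->]]] Tx0_lt] := inf_sqr_approx E_neq0 E_ge0 e_gt0; exists x0.
Qed.

Definition orth_image (x0 : H1) : set H2 := [set T y | y in [set y | D y /\ hdot y x0 = 0]].

Lemma linear_subspace_orth_image x0 : linear_subspace (orth_image x0).
Proof.
split; first by exists 0; [split; [exact: Dsub.1 | exact: dot0l] | exact: linear_on0].
move=> a _ _ [y1 [Dy1 y1x0] <-] [y2 [Dy2 y2x0] <-].
exists (a *: y1 + y2); last exact: Tlin.
by split; [exact: Dsub.2 | rewrite hdotDl y1x0 y2x0 mulr0 addr0].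
Qed.

Lemma min_modulus_le_dist_orth_image x0 u :
  D x0 -> hnorm x0 = 1 -> orth_image x0 u -> m <= hnorm (T x0 - u).
Proof.
move=> Dx0 x0_1 [y [Dy yx0] <-].
have x0y_ge1 : 1 <= hnorm (x0 - y).
  apply: le_of_sqr_le; first exact: hnorm_ge0.
  by rewrite hnormB_sqr x0_1 Re_dotC yx0 /= mulr0 subr0 expr1n lerDl sqr_ge0.
rewrite -linear_onB //; apply: le_trans (min_modulus_lb (linear_subspaceB Dsub Dx0 Dy)).
by rewrite ler_peMr // min_modulus_ge0.
Qed.

Lemma rank_one_perturbation_min_attaining x0 u :
  D x0 -> hnorm x0 = 1 ->
  (forall y, D y -> hdot y x0 = 0 -> hdot u (T y) = 0 /\ hnorm u * hnorm y <= hnorm (T y)) ->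
  minimum_attaining D (fun x => rank_one_op x0 (u - T x0) x + T x).
Proof.
move=> Dx0 x0_1 u_orth; set A := fun x => _.
have Ax0 : A x0 = u by rewrite /A rank_one_op_self // subrK.
have A_decomp x : D x -> A x = hdot x x0 *: u + T (x - hdot x x0 *: x0).
  move=> Dx; rewrite /A /rank_one_op linear_onB ?linear_onZ //; last exact: linear_subspaceZ.
  by rewrite scalerBr [LHS]addrAC addrA.
exists x0; split => //; split => //; rewrite Ax0; apply/le_anti/andP; split.
  apply: lb_le_inf; first by exists (hnorm (A x0)), x0.
  move=> _ [x [Dx [x_1 ->]]]; rewrite (A_decomp x Dx).
  have [yx0 x_sqr] := orth_decomp_unit x x0_1; rewrite x_1 expr1n in x_sqr.
  set y := x - _ in yx0 x_sqr *; set a := hdot x x0 in x_sqr *.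
  have Dy : D y by apply: linear_subspaceB => //; exact: linear_subspaceZ.
  have [uTy Ty_ge] := u_orth y Dy yx0.
  have Ty_sqr : (hnorm u * hnorm y) ^+ 2 <= hnorm (T y) ^+ 2.
    by rewrite ler_sqr ?nnegrE ?mulr_ge0 ?hnorm_ge0.
  have u_sqr : hnorm u ^+ 2 = hnorm u ^+ 2 * (normc a ^+ 2 + hnorm y ^+ 2).
    by rewrite -x_sqr mulr1.
  apply: le_of_sqr_le; first exact: hnorm_ge0.
  rewrite hnormD_sqr_orth ?hnormZ ?exprMn; first by rewrite exprMn in Ty_sqr; nra.
  by rewrite dotZl uTy mulr0.
apply: ge_inf; first by exists 0 => _ [x [_ [_ ->]]]; exact: hnorm_ge0.
by exists x0; rewrite Ax0.
Qed.

Lemma exists_rank_one_min_attaining c :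
  dense_in D -> (exists x : H1, x != 0) -> 0 < c ->
  exists x0 w, [/\ hnorm x0 = 1, hnorm w <= c,
    minimum_attaining D (fun x => rank_one_op x0 w x + T x) & (0 < m -> w != 0)].
Proof.
move=> Ddense H1_neq0 c_gt0; have c2_gt0 : 0 < c ^+ 2 / 2 by rewrite divr_gt0 ?exprn_gt0.
have [x0 [Dx0 x0_1 Tx0_near]] :=
  exists_unit_near_min_modulus (dense_subspace_unit Dsub Ddense H1_neq0) c2_gt0.
have [p [Mp orthM]] := orth_proj_exists (T x0) (linear_subspace_orth_image x0).
set v := T x0 - p.
have vp : hdot v p = 0 := orth_closure orthM Mp.
have m_le_v : m <= hnorm v.
  by apply: dist_le_closure Mp => u; exact: min_modulus_le_dist_orth_image.
have Tx0E : T x0 = v + p by rewrite subrK.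
have [mu [mu_ge0 mu_le m_mu_le mu_lt]] :=
  exists_nonneg_near_below min_modulus_ge0 (divr_gt0 c_gt0 (ltr0n _ 2)).
set u := (mu / hnorm v)%:C *: v.
have u_norm : hnorm u = mu.
  apply: hnorm_rescale => // v0; apply/le_anti; rewrite mu_ge0 (le_trans mu_le) //.
  by rewrite -(hnorm0 H2) -v0.
exists x0, (u - T x0); split => //.
- apply: le_of_sqr_le; first exact: ltW.
  have := hnorm_rescale_sub_sqr vp mu_ge0 mu_le m_le_v; rewrite -Tx0E.
  have : (m - mu) ^+ 2 <= (c / 2) ^+ 2 by rewrite ler_sqr ?nnegrE ?subr_ge0 //; lra.
  lra.
- apply: rank_one_perturbation_min_attaining => // y Dy yx0.
  have Ty_im : orth_image x0 (T y) by exists y.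
  split; first by rewrite /u dotZl orthM // mulr0.
  by rewrite u_norm; apply: le_trans (min_modulus_lb Dy); rewrite ler_wpM2r ?hnorm_ge0.
- move=> m_gt0; apply/eqP => /subr0_eq u_Tx0.
  have := min_modulus_lb Dx0; rewrite x0_1 mulr1 -u_Tx0 u_norm.
  by apply/negP; rewrite -ltNge mu_lt.
Qed.

End DenselyDefined.

Theorem theorem3p5 (R : realType) (H1 H2 : hilbert R) (D : set H1) (T : H1 -> H2) :
  infinite_dimensional H1 -> infinite_dimensional H2 ->
  densely_defined_closed D T ->
  forall eps : R, 0 < eps ->
  exists S : H1 -> H2,
    [/\ bounded_operator S, op_norm S <= eps,
        minimum_attaining D (fun x => S x + T x),
        gap D (fun x => S x + T x) D T <= eps &
        (0 < min_modulus D T -> rank_one S)].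
Proof.
move=> dimH1 _ [Dsub Tlin Ddense _] eps eps_gt0.
set c := Num.min eps (eps ^+ 2 / 2).
have c_gt0 : 0 < c by rewrite lt_min eps_gt0 divr_gt0 ?exprn_gt0.
have [x0 [w [x0_1 w_le Amin w_neq0]]] := exists_rank_one_min_attaining Dsub Tlin Ddense
  (infinite_dimensional_neq0 dimH1) c_gt0.
have S_le x : hnorm (rank_one_op x0 w x) <= c * hnorm x.
  by apply: le_trans (hnorm_rank_one_op _ _ _) _; rewrite x0_1 mulr1 ler_wpM2r ?hnorm_ge0.
exists (rank_one_op x0 w); split => //.
- exact: bounded_rank_one_op.
- by apply: le_trans (op_norm_le (ltW c_gt0) S_le) _; rewrite ge_min lexx.
- apply: le_trans (gap_perturbation_le D T (ltW c_gt0) S_le) _.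
  apply: le_of_sqr_le; first exact: ltW.
  have : c <= eps ^+ 2 / 2 by rewrite ge_min lexx orbT.
  by rewrite sqr_sqrtr; lra.
- move=> m_gt0; apply: rank_one_rank_one_op (w_neq0 m_gt0).
  by rewrite -hnorm_eq0 x0_1 oner_neq0.
Qed.
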